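(* Let $(H,R)$ be a semiquasitriangular Hopf algebra with Drinfeld element $u=S(R^{(2)})R^{(1)}$. Then $u$, $S(u)$ and $uS(u)$ are coinvariant for $\nu$, i.e. $\nu(u)=u\otimes 1$, $\nu(S(u))=S(u)\otimes 1$ and $\nu(uS(u))=uS(u)\otimes 1$.
   Context: All vector spaces are over a field $k$, $\otimes=\otimes_k$. For a Hopf algebra $H$ with comultiplication $\Delta$, counit $\epsilon$, antipode $S$, we use Sweedler notation $\Delta(h)=h_1\otimes h_2$, etc. $\operatorname{Z}(H)$ is the centre of $H$. For $R\in H\otimes H$ we write $R=R^{(1)}\otimes R^{(2)}$ (summation understood); $R'^{(1)}\otimes R'^{(2)}$ denotes another copy of $R$. Definition (semiquasitriangular Hopf algebra): a pair $(H,R)$ with $H$ a Hopf algebra with bijective antipode and $R\in H\otimes H$ invertible such that (1) $R^{(1)}_1\otimes R^{(1)}_2\otimes R^{(2)} = R^{(1)}\otimes R'^{(1)}\otimes R^{(2)}R'^{(2)}$; (2) $R^{(1)}\otimes R^{(2)}_1\otimes R^{(2)}_2 = R^{(1)}R'^{(1)}\otimes R'^{(2)}\otimes R^{(2)}$; (3) $R^{(1)}\otimes R^{(2)}_2R'^{(1)}\otimes R^{(2)}_1R'^{(2)} = R^{(1)}\otimes R'^{(1)}R^{(2)}_1\otimes R'^{(2)}R^{(2)}_2$; (4) $R^{(1)}_2R'^{(1)}\otimes R^{(1)}_1R'^{(2)}\otimes R^{(2)} = R'^{(1)}R^{(1)}_1\otimes R'^{(2)}R^{(1)}_2\otimes R^{(2)}$;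 (5) $\nu(h):=R^{(2)}h_2R'^{(2)}\otimes S(h_1)S(R^{(1)})h_3R'^{(1)}\in H\otimes\operatorname{Z}(H)$ for all $h\in H$; (6) $\nu(h)=R^{(1)}h_2R'^{(1)}\otimes S(R'^{(2)})S(h_1)R^{(2)}h_3$ for all $h\in H$. The map $\nu$ in the claim is the one defined in (5). *)

(* Hopf algebras over a field k, with elements of H (x) H and
   H (x) H (x) H represented by finite formal sums (sequences of pairs/triples)
   and equality of tensors given by the universal property of the tensor
   product: two formal sums are equal in the tensor product iff every
   (multi)linear map into every k-vector space takes the same value on them. *)
From HB Require Import structures.
From mathcomp Require Import all_boot all_order all_algebra.
Set Implicit Arguments. Unset Strict Implicit. Unset Printing Implicit Defensive.
Import Order.TTheory GRing.Theory Num.Theory.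
Local Open Scope ring_scope.

Section Tensors.
Variables (k : fieldType) (H : lmodType k).

Definition bilin (W : lmodType k) (f : H -> H -> W) : Prop :=
  (forall y a x x', f (a *: x + x') y = a *: f x y + f x' y) /\
  (forall x a y y', f x (a *: y + y') = a *: f x y + f x y').

Definition trilin (W : lmodType k) (f : H -> H -> H -> W) : Prop :=
  (forall y z a x x', f (a *: x + x') y z = a *: f x y z + f x' y z) /\
  (forall x z a y y', f x (a *: y + y') z = a *: f x y z + f x y' z) /\
  (forall x y a z z', f x y (a *: z + z') = a *: f x y z + f x y z').

Definition teq2 (t t' : seq (H * H)) : Prop :=
  forall (W : lmodType k) (f : H -> H -> W), bilin f ->
    \sum_(p <- t) f p.1 p.2 = \sum_(p <- t') f p.1 p.2.

Definition teq3 (t t' : seq (H * H * H)) : Prop :=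
  forall (W : lmodType k) (f : H -> H -> H -> W), trilin f ->
    \sum_(p <- t) f p.1.1 p.1.2 p.2 = \sum_(p <- t') f p.1.1 p.1.2 p.2.

End Tensors.

Section Hopf.
Variables (k : fieldType) (H : algType k).
Variables (D : H -> seq (H * H)) (eps : H -> k) (S : H -> H).

Definition tmul2 (t t' : seq (H * H)) : seq (H * H) :=
  [seq (p.1 * q.1, p.2 * q.2) | p <- t, q <- t'].

(* (Delta (x) id) Delta h  =  h_1 (x) h_2 (x) h_3 *)
Definition D3 (h : H) : seq (H * H * H) :=
  [seq (b.1, b.2, a.2) | a <- D h, b <- D a.1].
Definition D3' (h : H) : seq (H * H * H) :=
  [seq (a.1, b.1, b.2) | a <- D h, b <- D a.2].

Definition is_hopf : Prop :=
  (forall a x y, teq2 (D (a *: x + y))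
                      ([seq (a *: p.1, p.2) | p <- D x] ++ D y)) /\
  (forall x y, teq2 (D (x * y)) (tmul2 (D x) (D y))) /\
  teq2 (D 1) [:: (1, 1)] /\
  (forall h, teq3 (D3 h) (D3' h)) /\
  (forall a x y, eps (a *: x + y) = a * eps x + eps y) /\
  (forall x y, eps (x * y) = eps x * eps y) /\
  eps 1 = 1 /\
  (forall h, \sum_(p <- D h) eps p.1 *: p.2 = h) /\
  (forall h, \sum_(p <- D h) eps p.2 *: p.1 = h) /\
  (forall a x y, S (a *: x + y) = a *: S x + S y) /\
  (forall h, \sum_(p <- D h) S p.1 * p.2 = (eps h)%:A) /\
  (forall h, \sum_(p <- D h) p.1 * S p.2 = (eps h)%:A).

Definition central (z : H) : Prop := forall x : H, x * z = z * x.

Definition in_H_ZH (t : seq (H * H)) : Prop :=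
  exists t' : seq (H * H), teq2 t t' /\ forall p, p \in t' -> central p.2.

Variable R : seq (H * H).

Definition nu (h : H) : seq (H * H) :=
  flatten [seq [seq (r.2 * c.1.2 * s.2, S c.1.1 * S r.1 * c.2 * s.1)
                  | c <- D3 h, s <- R] | r <- R].

Definition semiquasitriangular : Prop :=
  is_hopf /\ bijective S /\
  (exists Ri, teq2 (tmul2 R Ri) [:: (1, 1)] /\ teq2 (tmul2 Ri R) [:: (1, 1)]) /\
  teq3 [seq (b.1, b.2, r.2) | r <- R, b <- D r.1]
       [seq (r.1, s.1, r.2 * s.2) | r <- R, s <- R] /\
  teq3 [seq (r.1, b.1, b.2) | r <- R, b <- D r.2]
       [seq (r.1 * s.1, s.2, r.2) | r <- R, s <- R] /\
  teq3 (flatten [seq [seq (r.1, b.2 * s.1, b.1 * s.2) | b <- D r.2, s <- R] | r <- R])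
       (flatten [seq [seq (r.1, s.1 * b.1, s.2 * b.2) | b <- D r.2, s <- R] | r <- R]) /\
  teq3 (flatten [seq [seq (b.2 * s.1, b.1 * s.2, r.2) | b <- D r.1, s <- R] | r <- R])
       (flatten [seq [seq (s.1 * b.1, s.2 * b.2, r.2) | b <- D r.1, s <- R] | r <- R]) /\
  (forall h, in_H_ZH (nu h)) /\
  (forall h, teq2 (nu h)
     (flatten [seq [seq (r.1 * c.1.2 * s.1, S s.2 * S c.1.1 * r.2 * c.2)
                      | c <- D3 h, s <- R] | r <- R])).

Definition drinfeld_u : H := \sum_(r <- R) S r.2 * r.1.

End Hopf.

From HB Require Import structures.
From mathcomp Require Import all_boot all_order all_algebra.
Set Implicit Arguments. Unset Strict Implicit. Unset Printing Implicit Defensive.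
Import GRing.Theory.
Local Open Scope ring_scope.

(* The map nu is multiplicative: in nu(x) nu(y) the second leg of nu(x) is
   central, so S(y_1) can be moved in front of it, after which the factor
   R21 (id (x) S)(R21) between the two copies collapses to 1 (x) 1.  Writing
   u = S(R2) R1 and S(u) = S(R1) S(S(R2)), it therefore suffices that the tensors
   R, (S (x) id)(R), (S (x) id)(R21) and (S^2 (x) id)(R21) are nu-coinvariant, where
   sum x (x) c is nu-coinvariant if (nu (x) id)(sum x (x) c) = sum x (x) 1 (x) c.  By coassociativity nu(x) contains
   Delta(x_2) R21; the axioms (3) and (4) on the legs of R, combined with (1), (2)
   and their transports along S (Delta S = (S (x) S) Delta^op and (S (x) S) R = R),
   turn it into R21 Delta^op(x_2), and then (S (x) id)(R) R = 1 (x) 1 together with the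
   antipode and counit axioms reduce nu(x) to x (x) 1. *)

Section Linear.
Variable k : fieldType.

Definition quadlin (V W : lmodType k) (f : V -> V -> V -> V -> W) : Prop :=
  (forall y z w, linear (fun x => f x y z w)) /\ (forall x z w, linear (fun y => f x y z w)) /\
  (forall x y w, linear (fun z => f x y z w)) /\ (forall x y z, linear (fun w => f x y z w)).

Definition tsum (T : Type) (W : lmodType k) (t : seq (T * T)) (F : T -> T -> W) : W :=
  \sum_(p <- t) F p.1 p.2.

Section Tsum.
Variables (T : Type) (W : lmodType k).
Implicit Types (t : seq (T * T)) (F G : T -> T -> W).

Lemma eq_tsum t F G : (forall a b, F a b = G a b) -> tsum t F = tsum t G.
Proof. by move=> eFG; apply: eq_bigr => p _; rewrite eFG. Qed.

Lemma tsum_exchange t t' (F : T -> T -> T -> T -> W) :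
  tsum t (fun a b => tsum t' (fun c d => F a b c d)) =
  tsum t' (fun c d => tsum t (fun a b => F a b c d)).
Proof. exact: exchange_big. Qed.

Lemma tsum_map (T' : Type) (t : seq (T' * T')) (phi : T' * T' -> T * T) F :
  tsum [seq phi p | p <- t] F = tsum t (fun a b => F (phi (a, b)).1 (phi (a, b)).2).
Proof. by rewrite /tsum big_map; apply: eq_bigr => -[]. Qed.

Lemma tsum_scale t c F : tsum t (fun a b => c *: F a b) = c *: tsum t F.
Proof. by rewrite /tsum scaler_sumr. Qed.
End Tsum.

Variables (U V W : lmodType k).

Lemma linear_fun_sum (g : V -> W) (I : Type) (s : seq I) (F : I -> V) :
  linear g -> g (\sum_(i <- s) F i) = \sum_(i <- s) g (F i).
Proof.
move=> hg; elim: s => [|i s IH].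
  by rewrite !big_nil -(subrr (0 : V)) (zmod_morphism_linear hg) subrr.
by rewrite !big_cons -IH -[g (F i)]scale1r -hg scale1r.
Qed.

Lemma tsum_linear (g : V -> W) (T : Type) (t : seq (T * T)) (F : T -> T -> V) :
  linear g -> tsum t (fun a b => g (F a b)) = g (tsum t F).
Proof. by move=> hg; rewrite /tsum linear_fun_sum. Qed.

Lemma linear_eq (g g' : V -> W) : (forall x, g' x = g x) -> linear g -> linear g'.
Proof. by move=> eg hg a x y; rewrite !eg hg. Qed.

Lemma linear_id : linear (fun x : V => x). Proof. by []. Qed.

Lemma linear_comp (g : U -> W) (phi : V -> U) :
  linear g -> linear phi -> linear (fun x => g (phi x)).
Proof. by move=> hg hp a x y; rewrite hp hg. Qed.

Lemma linear_sum_fun (I : Type) (s : seq I) (F : I -> V -> W) :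
  (forall i, linear (F i)) -> linear (fun x => \sum_(i <- s) F i x).
Proof.
move=> hF a x y; rewrite scaler_sumr -big_split /=.
by apply: eq_bigr => i _; rewrite hF.
Qed.

Lemma linear_scale (c : k) (g : V -> W) : linear g -> linear (fun x => c *: g x).
Proof. by move=> hg a x y; rewrite hg scalerDr !scalerA mulrC. Qed.

Lemma bilinP (f : V -> V -> W) :
  (forall y, linear (fun x => f x y)) -> (forall x, linear (fun y => f x y)) -> bilin f.
Proof. by []. Qed.

Lemma trilinP (f : V -> V -> V -> W) :
  (forall y z, linear (fun x => f x y z)) -> (forall x z, linear (fun y => f x y z)) ->
  (forall x y, linear (fun z => f x y z)) -> trilin f.
Proof. by []. Qed.

Lemma quadlinP (f : V -> V -> V -> V -> W) :
  (forall y z w, linear (fun x => f x y z w)) -> (forall x z w, linear (fun y => f x y z w)) ->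
  (forall x y w, linear (fun z => f x y z w)) -> (forall x y z, linear (fun w => f x y z w)) ->
  quadlin f.
Proof. by []. Qed.

Lemma bilin_linearl (f : V -> V -> W) y : bilin f -> linear (fun x => f x y).
Proof. by case=> h _; apply: h. Qed.
Lemma bilin_linearr (f : V -> V -> W) x : bilin f -> linear (fun y => f x y).
Proof. by case=> _ h; apply: h. Qed.
Lemma trilin_linear1 (f : V -> V -> V -> W) y z : trilin f -> linear (fun x => f x y z).
Proof. by case=> h _; apply: h. Qed.
Lemma trilin_linear2 (f : V -> V -> V -> W) x z : trilin f -> linear (fun y => f x y z).
Proof. by case=> _ [h _]; apply: h. Qed.
Lemma trilin_linear3 (f : V -> V -> V -> W) x y : trilin f -> linear (fun z => f x y z).
Proof. by case=> _ [_ h]; apply: h. Qed.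
Lemma quadlin_linear1 (f : V -> V -> V -> V -> W) y z w : quadlin f -> linear (fun x => f x y z w).
Proof. by case=> h _; apply: h. Qed.
Lemma quadlin_linear2 (f : V -> V -> V -> V -> W) x z w : quadlin f -> linear (fun y => f x y z w).
Proof. by case=> _ [h _]; apply: h. Qed.
Lemma quadlin_linear3 (f : V -> V -> V -> V -> W) x y w : quadlin f -> linear (fun z => f x y z w).
Proof. by case=> _ [_ [h _]]; apply: h. Qed.
Lemma quadlin_linear4 (f : V -> V -> V -> V -> W) x y z : quadlin f -> linear (fun w => f x y z w).
Proof. by case=> _ [_ [_ h]]; apply: h. Qed.
End Linear.

Lemma idempotent_rinv_eq1 (A : pzRingType) (e x : A) : e * e = e -> e * x = 1 -> e = 1.
Proof. by move=> ee ex; rewrite -ex -[in RHS]ee -mulrA ex mulr1. Qed.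

Section Hopf.
Variables (k : fieldType) (H : algType k).
Variables (D : H -> seq (H * H)) (eps : H -> k) (S : H -> H).

Hypothesis D_linear : forall a x y, teq2 (D (a *: x + y))
  ([seq (a *: p.1, p.2) | p <- D x] ++ D y).
Hypothesis DM : forall x y, teq2 (D (x * y)) (tmul2 (D x) (D y)).
Hypothesis D1 : teq2 (D 1) [:: (1, 1)].
Hypothesis D_coassoc : forall h, teq3 (D3 D h) (D3' D h).
Hypothesis eps_linear : forall a x y, eps (a *: x + y) = a * eps x + eps y.
Hypothesis epsM : forall x y, eps (x * y) = eps x * eps y.
Hypothesis eps1 : eps 1 = 1.
Hypothesis counitl : forall h, \sum_(p <- D h) eps p.1 *: p.2 = h.
Hypothesis counitr : forall h, \sum_(p <- D h) eps p.2 *: p.1 = h.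
Hypothesis S_linear : linear S.
Hypothesis antipodel : forall h, \sum_(p <- D h) S p.1 * p.2 = (eps h)%:A.
Hypothesis antipoder : forall h, \sum_(p <- D h) p.1 * S p.2 = (eps h)%:A.

Section Closure.
Variable W : lmodType k.

Lemma linear_tsum (t : seq (H * H)) (F : H -> H -> H -> W) :
  (forall a b, linear (F a b)) -> linear (fun x => tsum t (fun a b => F a b x)).
Proof. by move=> hF; apply: linear_sum_fun => p; apply: hF. Qed.

Lemma linear_tsum_D (F : H -> H -> W) (phi : H -> H) :
  bilin F -> linear phi -> linear (fun x => tsum (D (phi x)) F).
Proof.
move=> hF hphi a x y; rewrite hphi /tsum (D_linear a (phi x) (phi y) hF).
rewrite big_cat big_map /= scaler_sumr; congr (_ + _).
by apply: eq_bigr => p _; rewrite (scalable_linear (bilin_linearl _ hF)).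
Qed.

Lemma linear_S (phi : H -> H) : linear phi -> linear (fun x => S (phi x)).
Proof. exact: linear_comp S_linear. Qed.

Lemma linear_mulr (phi : H -> H) c : linear phi -> linear (fun x => phi x * c).
Proof. by move=> hphi a x y; rewrite hphi mulrDl scalerAl. Qed.

Lemma linear_mull (phi : H -> H) c : linear phi -> linear (fun x => c * phi x).
Proof. by move=> hphi a x y; rewrite hphi mulrDr scalerAr. Qed.

Lemma linear_eps_scale (phi : H -> H) (c : W) : linear phi -> linear (fun x => eps (phi x) *: c).
Proof. by move=> hphi a x y; rewrite hphi eps_linear scalerDl scalerA. Qed.
End Closure.

Ltac linear_step := match goal with
 | |- bilin _ => apply: bilinP => ? /=
 | |- trilin _ => apply: trilinP => ? ? /=
 | |- quadlin _ => apply: quadlinP => ? ? ? /=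
 | |- linear (fun x => x) => exact: linear_id
 | |- linear (fun _ => tsum _ _) => first [apply: linear_tsum => ? ? /= | apply: linear_tsum_D]
 | |- linear (fun _ => \sum_(_ <- _) _) => apply: linear_sum_fun => ? /=
 | |- linear (fun _ => S _) => apply: linear_S
 | |- linear (fun _ => _ * _) => first [apply: linear_mulr | apply: linear_mull]
 | |- linear (fun _ => eps _ *: _) => apply: linear_eps_scale
 | |- linear (fun _ => _ *: _) => apply: linear_scale
 | hf : bilin ?f |- linear (fun x => ?f (@?E x) ?c) => apply: (linear_comp (bilin_linearl c hf))
 | hf : bilin ?f |- linear (fun x => ?f ?c (@?E x)) => apply: (linear_comp (bilin_linearr c hf))
 | hf : trilin ?f |- linear (fun x => ?f (@?E x) ?c ?d) => apply: (linear_comp (trilin_linear1 c d hf))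
 | hf : trilin ?f |- linear (fun x => ?f ?c (@?E x) ?d) => apply: (linear_comp (trilin_linear2 c d hf))
 | hf : trilin ?f |- linear (fun x => ?f ?c ?d (@?E x)) => apply: (linear_comp (trilin_linear3 c d hf))
 | hf : quadlin ?f |- linear (fun x => ?f (@?E x) ?c ?d ?e) => apply: (linear_comp (quadlin_linear1 c d e hf))
 | hf : quadlin ?f |- linear (fun x => ?f ?c (@?E x) ?d ?e) => apply: (linear_comp (quadlin_linear2 c d e hf))
 | hf : quadlin ?f |- linear (fun x => ?f ?c ?d (@?E x) ?e) => apply: (linear_comp (quadlin_linear3 c d e hf))
 | hf : quadlin ?f |- linear (fun x => ?f ?c ?d ?e (@?E x)) => apply: (linear_comp (quadlin_linear4 c d e hf))
 (* eta-expand partial applications such as [S] or [f a] *)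
 | |- linear ?g => lazymatch g with fun _ => _ => fail | _ => change (linear (fun x => g x)) end
 end.
Ltac linear_tac := repeat linear_step.

Section HopfBasics.
Variable W : lmodType k.
Implicit Types (F G : H -> H -> W).

Lemma tsum_DM x y F : bilin F ->
  tsum (D (x * y)) F = tsum (D x) (fun a1 a2 => tsum (D y) (fun b1 b2 => F (a1 * b1) (a2 * b2))).
Proof. by move=> hF; rewrite /tsum (DM x y hF) /tmul2 big_allpairs_dep. Qed.

Lemma tsum_D1 F : bilin F -> tsum (D 1) F = F 1 1.
Proof. by move=> hF; rewrite /tsum (D1 hF) big_seq1. Qed.

Lemma tsum_D_coassoc h (G : H -> H -> H -> W) : trilin G ->
  tsum (D h) (fun a1 a2 => tsum (D a1) (fun b1 b2 => G b1 b2 a2)) =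
  tsum (D h) (fun a1 a2 => tsum (D a2) (fun b1 b2 => G a1 b1 b2)).
Proof. by move=> hG; have := D_coassoc h hG; rewrite /D3 /D3' !big_allpairs_dep. Qed.

Lemma tsum_D_counitl h (g : H -> W) : linear g -> tsum (D h) (fun a b => eps a *: g b) = g h.
Proof.
move=> hg; rewrite -{2}(counitl h) linear_fun_sum //; apply: eq_bigr => p _.
by rewrite (scalable_linear hg).
Qed.
Lemma tsum_D_counitr h (g : H -> W) : linear g -> tsum (D h) (fun a b => eps b *: g a) = g h.
Proof.
move=> hg; rewrite -{2}(counitr h) linear_fun_sum //; apply: eq_bigr => p _.
by rewrite (scalable_linear hg).
Qed.
Lemma tsum_D_antipodel h (g : H -> W) : linear g -> tsum (D h) (fun a b => g (S a * b)) = eps h *: g 1.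
Proof. by move=> hg; rewrite /tsum -linear_fun_sum // antipodel (scalable_linear hg). Qed.
Lemma tsum_D_antipoder h (g : H -> W) : linear g -> tsum (D h) (fun a b => g (a * S b)) = eps h *: g 1.
Proof. by move=> hg; rewrite /tsum -linear_fun_sum // antipoder (scalable_linear hg). Qed.
End HopfBasics.

Lemma antipode1 : S 1 = 1.
Proof.
have hb : bilin (fun a b : H => S a * b) by linear_tac.
by have := tsum_D1 hb; rewrite /tsum antipodel eps1 scale1r mulr1 => <-.
Qed.
(* S(xy) = eps(x1) eps(y1) S(x2 y2) = S(y1) S(x1) x2 y2 S(x3 y3) = S(y1) S(x1) eps(x2 y2). *)
Lemma antipodeM x y : S (x * y) = S y * S x.
Proof.
have counits : S (x * y) = tsum (D x) (fun a1 a2 => eps a1 *: tsum (D y) (fun b1 b2 => eps b1 *: S (a2 * b2))).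
  rewrite -[in LHS](tsum_D_counitl x (g := fun z => S (z * y))); last by linear_tac.
  apply: eq_tsum => a1 a2 /=; congr (_ *: _).
  by rewrite -[in LHS](tsum_D_counitl y (g := fun z => S (a2 * z))) //; linear_tac.
have insert_antipodes : forall a1 a2, eps a1 *: tsum (D y) (fun b1 b2 => eps b1 *: S (a2 * b2)) =
   tsum (D a1) (fun c1 c2 => tsum (D y) (fun b1 b2 => tsum (D b1) (fun d1 d2 =>
        S d1 * (S c1 * c2) * d2 * S (a2 * b2)))).
  move=> a1 a2.
  rewrite (tsum_D_antipodel a1 (g := fun z => tsum (D y) (fun b1 b2 => tsum (D b1) (fun d1 d2 =>
        S d1 * z * d2 * S (a2 * b2))))); last by linear_tac.
  congr (_ *: _); apply: eq_tsum => b1 b2.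
  under [RHS]eq_tsum => d1 d2 do rewrite mulr1.
  rewrite (tsum_D_antipodel b1 (g := fun w => w * S (a2 * b2))); last by linear_tac.
  by rewrite mul1r.
rewrite counits; under eq_tsum => a1 a2 do rewrite insert_antipodes.
rewrite tsum_D_coassoc; last by linear_tac.
under eq_tsum => a1 a2 do rewrite tsum_exchange.
under eq_tsum => a1 a2 do under eq_tsum => b1 b2 do rewrite tsum_exchange.
under eq_tsum => a1 a2 do (rewrite tsum_D_coassoc; last by linear_tac).
have antipode_collapse : forall P a2 b2, tsum (D a2) (fun c1 c2 => tsum (D b2) (fun d1 d2 => P * (c1 * d1 * S (c2 * d2)))) =
    (eps a2 * eps b2) *: P.
  move=> P a2 b2.
  rewrite -(tsum_DM a2 b2 (F := fun e1 e2 => P * (e1 * S e2))); last by linear_tac.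
  by rewrite (tsum_D_antipoder _ (g := fun z => P * z)) ?epsM ?mulr1 //; linear_tac.
under eq_tsum => a1 a2 do under eq_tsum => b1 b2 do rewrite tsum_exchange.
under eq_tsum => a1 a2 do under eq_tsum => b1 b2 do
  (under eq_tsum => c1 c2 do under eq_tsum => d1 d2 do rewrite -!mulrA mulrA [c1 * _]mulrA; rewrite antipode_collapse).
under eq_tsum => a1 a2 do (under eq_tsum => b1 b2 do rewrite -scalerA;
   rewrite tsum_scale (tsum_D_counitr y (g := fun z => S z * S a1)); last by linear_tac).
by rewrite (tsum_D_counitr x (g := fun z => S y * S z)) //; linear_tac.
Qed.

Lemma eps_scale_split (W : lmodType k) z c1 c2 (F : H -> H -> W) : bilin F ->
  eps z *: F c1 c2 = tsum (D z) (fun z1 z2 => tsum (D z2) (fun w1 w2 => tsum (D w2) (fun v1 v2 =>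
                      F (c1 * z1 * S v2) (c2 * w1 * S v1)))).
Proof.
move=> hF; pose G p q := F (c1 * p) (c2 * q).
have hG : bilin G by rewrite /G; linear_tac.
transitivity (tsum (D z) (fun z1 z2 => tsum (D z2) (fun w1 w2 => tsum (D w2) (fun v1 v2 =>
                G (z1 * S v2) (w1 * S v1))))); last first.
  by do 3 (apply: eq_tsum => ? ? /=); rewrite /G !mulrA.
under eq_tsum => z1 z2 do (rewrite -tsum_D_coassoc; last by linear_tac).
under eq_tsum => z1 z2 do under eq_tsum => w1 w2 do
  (rewrite (tsum_D_antipoder w1 (g := fun t => G (z1 * S w2) t)); last by linear_tac).
under eq_tsum => z1 z2 do (rewrite (tsum_D_counitl z2 (g := fun t => G (z1 * S t) 1)); last by linear_tac).
by rewrite (tsum_D_antipoder z (g := fun t => G t 1)) /G ?mulr1 //; linear_tac.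
Qed.

(* Delta(S x) = Delta(S x1) Delta(x2) (S x4 (x) S x3) = Delta(S(x1) x2) (S x4 (x) S x3) = S x2 (x) S x1. *)
Lemma tsum_D_antipode (W : lmodType k) x (F : H -> H -> W) : bilin F ->
  tsum (D (S x)) F = tsum (D x) (fun a b => F (S b) (S a)).
Proof.
move=> hF.
rewrite -[LHS](tsum_D_counitr x (g := fun t => tsum (D (S t)) F)); last by linear_tac.
under eq_tsum => a1 a2 do rewrite -tsum_scale.
under eq_tsum => a1 a2 do under eq_tsum => e1 e2 do (rewrite eps_scale_split; last by []).
under eq_tsum => a1 a2 do under eq_tsum => e1 e2 do (rewrite -tsum_D_coassoc; last by linear_tac).
under eq_tsum => a1 a2 do rewrite tsum_exchange.
under eq_tsum => a1 a2 do under eq_tsum => z1 z2 do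
  (rewrite -(tsum_DM (S a1) z1 (F := fun m1 m2 => tsum (D z2) (fun v1 v2 => F (m1 * S v2) (m2 * S v1))));
   last by linear_tac).
rewrite -tsum_D_coassoc; last by linear_tac.
under eq_tsum => a1 a2 do
  (rewrite (tsum_D_antipodel a1 (g := fun t => tsum (D t) (fun m1 m2 => tsum (D a2) (fun v1 v2 => F (m1 * S v2) (m2 * S v1)))));
   last by linear_tac).
under eq_tsum => a1 a2 do (rewrite tsum_D1; last by linear_tac).
rewrite (tsum_D_counitl x (g := fun t => tsum (D t) (fun v1 v2 => F (1 * S v2) (1 * S v1)))); last by linear_tac.
by apply: eq_tsum => ? ?; rewrite !mul1r.
Qed.

Variable R : seq (H * H).

Hypothesis R_invertible :
  exists Ri, teq2 (tmul2 R Ri) [:: (1, 1)] /\ teq2 (tmul2 Ri R) [:: (1, 1)].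
Hypothesis coprod_Rl : teq3 [seq (b.1, b.2, r.2) | r <- R, b <- D r.1]
  [seq (r.1, s.1, r.2 * s.2) | r <- R, s <- R].
Hypothesis coprod_Rr : teq3 [seq (r.1, b.1, b.2) | r <- R, b <- D r.2]
  [seq (r.1 * s.1, s.2, r.2) | r <- R, s <- R].
Hypothesis qcocomm_Rr :
  teq3 (flatten [seq [seq (r.1, b.2 * s.1, b.1 * s.2) | b <- D r.2, s <- R] | r <- R])
       (flatten [seq [seq (r.1, s.1 * b.1, s.2 * b.2) | b <- D r.2, s <- R] | r <- R]).
Hypothesis qcocomm_Rl :
  teq3 (flatten [seq [seq (b.2 * s.1, b.1 * s.2, r.2) | b <- D r.1, s <- R] | r <- R])
       (flatten [seq [seq (s.1 * b.1, s.2 * b.2, r.2) | b <- D r.1, s <- R] | r <- R]).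
Hypothesis nu_in_H_ZH : forall h, in_H_ZH (nu D S R h).

Section RAxioms.
Variable W : lmodType k.
Implicit Types (G : H -> H -> H -> W).

Lemma tsum_R_coprodl G : trilin G ->
  tsum R (fun r1 r2 => tsum (D r1) (fun b1 b2 => G b1 b2 r2)) =
  tsum R (fun r1 r2 => tsum R (fun s1 s2 => G r1 s1 (r2 * s2))).
Proof. by move=> hG; have := coprod_Rl hG; rewrite !big_allpairs_dep. Qed.

Lemma tsum_R_coprodr G : trilin G ->
  tsum R (fun r1 r2 => tsum (D r2) (fun b1 b2 => G r1 b1 b2)) =
  tsum R (fun r1 r2 => tsum R (fun s1 s2 => G (r1 * s1) s2 r2)).
Proof. by move=> hG; have := coprod_Rr hG; rewrite !big_allpairs_dep. Qed.

Lemma tsum_R_qcocommr G : trilin G ->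
  tsum R (fun r1 r2 => tsum (D r2) (fun b1 b2 => tsum R (fun s1 s2 => G r1 (b2 * s1) (b1 * s2)))) =
  tsum R (fun r1 r2 => tsum (D r2) (fun b1 b2 => tsum R (fun s1 s2 => G r1 (s1 * b1) (s2 * b2)))).
Proof.
move=> hG; have := qcocomm_Rr hG; rewrite !big_flatten !big_map /=.
by under eq_bigr => ? _ do rewrite big_allpairs_dep; under [RHS]eq_bigr => ? _ do rewrite big_allpairs_dep.
Qed.

Lemma tsum_R_qcocomml G : trilin G ->
  tsum R (fun r1 r2 => tsum (D r1) (fun b1 b2 => tsum R (fun s1 s2 => G (b2 * s1) (b1 * s2) r2))) =
  tsum R (fun r1 r2 => tsum (D r1) (fun b1 b2 => tsum R (fun s1 s2 => G (s1 * b1) (s2 * b2) r2))).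
Proof.
move=> hG; have := qcocomm_Rl hG; rewrite !big_flatten !big_map /=.
by under eq_bigr => ? _ do rewrite big_allpairs_dep; under [RHS]eq_bigr => ? _ do rewrite big_allpairs_dep.
Qed.
End RAxioms.

Lemma tsum_mul (t t' : seq (H * H)) (F G : H -> H -> H) :
  tsum t F * tsum t' G = tsum t (fun a b => tsum t' (fun c d => F a b * G c d)).
Proof. by rewrite /tsum mulr_suml; apply: eq_bigr => p _; rewrite mulr_sumr. Qed.

Lemma R_counitl : tsum R (fun a b => eps a *: b) = 1.
Proof.
have hb : bilin (fun a b : H => eps a *: b) by linear_tac.
have idem : tsum R (fun a b => eps a *: b) * tsum R (fun a b => eps a *: b) =
            tsum R (fun a b => eps a *: b).
  rewrite tsum_mul.
  transitivity (tsum R (fun r1 r2 => tsum R (fun s1 s2 => eps r1 *: (eps s1 *: (r2 * s2))))).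
    by do 2 (apply: eq_tsum => ? ? /=); rewrite -scalerAl -scalerAr.
  rewrite -(tsum_R_coprodl (G := fun x y z => eps x *: (eps y *: z))); last by linear_tac.
  by apply: eq_tsum => r1 r2; rewrite (tsum_D_counitl r1 (g := fun t => eps t *: r2)) //; linear_tac.
case: R_invertible => Ri [RRi _].
apply: (idempotent_rinv_eq1 idem (x := tsum Ri (fun a b => eps a *: b))).
have := RRi _ _ hb; rewrite big_seq1 eps1 scale1r /tmul2 big_allpairs_dep /= => <-.
rewrite tsum_mul; apply: eq_bigr => r _; apply: eq_bigr => s _.
by rewrite epsM -scalerA -scalerAl -scalerAr.
Qed.

Lemma R_counitr : tsum R (fun a b => eps b *: a) = 1.
Proof.
have hb : bilin (fun a b : H => eps b *: a) by linear_tac.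
have idem : tsum R (fun a b => eps b *: a) * tsum R (fun a b => eps b *: a) =
            tsum R (fun a b => eps b *: a).
  rewrite tsum_mul.
  transitivity (tsum R (fun r1 r2 => tsum R (fun s1 s2 => eps s2 *: (eps r2 *: (r1 * s1))))).
    by do 2 (apply: eq_tsum => ? ? /=); rewrite -scalerAl -scalerAr scalerA [eps _ * _]mulrC -scalerA.
  rewrite -(tsum_R_coprodr (G := fun x y z => eps y *: (eps z *: x))); last by linear_tac.
  by apply: eq_tsum => r1 r2; rewrite (tsum_D_counitl r2 (g := fun t => eps t *: r1)) //; linear_tac.
case: R_invertible => Ri [RRi _].
apply: (idempotent_rinv_eq1 idem (x := tsum Ri (fun a b => eps b *: a))).
have := RRi _ _ hb; rewrite big_seq1 eps1 scale1r /tmul2 big_allpairs_dep /= => <-.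
rewrite tsum_mul; apply: eq_bigr => r _; apply: eq_bigr => s _.
by rewrite epsM -scalerA -scalerAl -scalerAr.
Qed.

Section RAntipode.
Variable W : lmodType k.
Implicit Types (f : H -> H -> W).

Lemma tsum_SR_R f : bilin f ->
  tsum R (fun r1 r2 => tsum R (fun s1 s2 => f (S r1 * s1) (r2 * s2))) = f 1 1.
Proof.
move=> hf.
rewrite -(tsum_R_coprodl (G := fun x y z => f (S x * y) z)) /=; last by linear_tac.
under eq_tsum => r1 r2 do (rewrite (tsum_D_antipodel r1 (g := fun t => f t r2)); last by linear_tac).
under eq_tsum => r1 r2 do rewrite -(scalable_linear (bilin_linearr 1 hf)).
by rewrite (tsum_linear (g := f 1)) ?R_counitl //; linear_tac.
Qed.

Lemma tsum_R_SR f : bilin f ->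
  tsum R (fun r1 r2 => tsum R (fun s1 s2 => f (r1 * S s1) (r2 * s2))) = f 1 1.
Proof.
move=> hf.
rewrite -(tsum_R_coprodl (G := fun x y z => f (x * S y) z)) /=; last by linear_tac.
under eq_tsum => r1 r2 do (rewrite (tsum_D_antipoder r1 (g := fun t => f t r2)); last by linear_tac).
under eq_tsum => r1 r2 do rewrite -(scalable_linear (bilin_linearr 1 hf)).
by rewrite (tsum_linear (g := f 1)) ?R_counitl //; linear_tac.
Qed.

Lemma tsum_R_RS f : bilin f ->
  tsum R (fun r1 r2 => tsum R (fun s1 s2 => f (r1 * s1) (s2 * S r2))) = f 1 1.
Proof.
move=> hf.
rewrite -(tsum_R_coprodr (G := fun x y z => f x (y * S z))) /=; last by linear_tac.
under eq_tsum => r1 r2 do (rewrite (tsum_D_antipoder r2 (g := fun t => f r1 t)); last by linear_tac).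
under eq_tsum => r1 r2 do rewrite -(scalable_linear (bilin_linearl 1 hf)).
by rewrite (tsum_linear (g := fun t => f t 1)) ?R_counitr //; linear_tac.
Qed.

Lemma tsum_R_SS f : bilin f -> tsum R (fun a b => f (S a) (S b)) = tsum R f.
Proof.
move=> hf.
transitivity (tsum R (fun t1 t2 => tsum R (fun r1 r2 => tsum R (fun s1 s2 =>
    f (S t1 * (r1 * s1)) (s2 * S r2 * S t2))))).
  apply: eq_tsum => t1 t2.
  rewrite (tsum_R_RS (f := fun p q => f (S t1 * p) (q * S t2))) /=; last by linear_tac.
  by rewrite mulr1 mul1r.
under eq_tsum => t1 t2 do rewrite tsum_exchange.
rewrite tsum_exchange.
transitivity (tsum R (fun s1 s2 => tsum R (fun t1 t2 => tsum R (fun r1 r2 =>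
   (fun p q => f (p * s1) (s2 * S q)) (S t1 * r1) (t2 * r2))))).
  by do 3 (apply: eq_tsum => ? ? /=); rewrite antipodeM !mulrA.
apply: eq_tsum => s1 s2.
rewrite (tsum_SR_R (f := fun p q => f (p * s1) (s2 * S q))); last by linear_tac.
by rewrite /= mul1r antipode1 mulr1.
Qed.
End RAntipode.

Lemma tsum_nu (W : lmodType k) x (f : H -> H -> W) :
  tsum (nu D S R x) f =
  tsum R (fun r1 r2 => tsum (D x) (fun a1 a2 => tsum (D a1) (fun b1 b2 => tsum R (fun s1 s2 =>
      f (r2 * b2 * s2) (S b1 * S r1 * a2 * s1))))).
Proof.
rewrite /tsum /nu big_flatten big_map; apply: eq_bigr => r _.
by rewrite big_allpairs_dep /D3 big_allpairs_dep.
Qed.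

Lemma linear_tsum_nu (W : lmodType k) (f : H -> H -> W) (phi : H -> H) :
  bilin f -> linear phi -> linear (fun x => tsum (nu D S R (phi x)) f).
Proof.
move=> hf hphi; apply: linear_eq; first by move=> x; apply: tsum_nu.
by linear_tac.
Qed.

Ltac nu_linear_tac := repeat (first [apply: linear_tsum_nu | linear_step]).

(* For [L = sum x (x) c] in [H (x) H]: [(Delta (x) id)(L) R21_12 = R21_12 (Delta^op (x) id)(L)]. *)
Definition quasi_cocomm (L : seq (H * H)) : Prop :=
  forall (W : lmodType k) (G : H -> H -> H -> W), trilin G ->
  tsum L (fun x c => tsum (D x) (fun b1 b2 => tsum R (fun s1 s2 => G (b1 * s2) (b2 * s1) c))) =
  tsum L (fun x c => tsum (D x) (fun b1 b2 => tsum R (fun s1 s2 => G (s2 * b2) (s1 * b1) c))).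

(* [((id (x) Delta) Delta (x) id)(L) R21_23 = R21_23 ((id (x) Delta^op) Delta (x) id)(L)]. *)
Definition quasi_cocomm_coprod (L : seq (H * H)) : Prop :=
  forall (W : lmodType k) (g : H -> H -> H -> H -> W), quadlin g ->
  tsum L (fun x c => tsum (D x) (fun a1 a2 => tsum (D a2) (fun b1 b2 =>
    tsum R (fun s1 s2 => g a1 (b1 * s2) (b2 * s1) c)))) =
  tsum L (fun x c => tsum (D x) (fun a1 a2 => tsum (D a2) (fun b1 b2 =>
    tsum R (fun s1 s2 => g a1 (s2 * b2) (s1 * b1) c)))).

(* [(nu (x) id)(L) = L_13]. *)
Definition nu_coinvariant (L : seq (H * H)) : Prop :=
  forall (W : lmodType k) (g : H -> H -> H -> W), trilin g ->
  tsum L (fun x c => tsum (nu D S R x) (fun p q => g p q c)) = tsum L (fun x c => g x 1 c).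

Lemma quasi_cocomm_R : quasi_cocomm R.
Proof.
move=> W G hG; have hG' : trilin (fun x y z => G y x z) by linear_tac.
exact: (tsum_R_qcocomml hG').
Qed.

Lemma quasi_cocomm_Rswap : quasi_cocomm [seq (r.2, r.1) | r <- R].
Proof.
move=> W G hG; have hG' : trilin (fun z x y => G y x z) by linear_tac.
by rewrite !tsum_map; exact: (tsum_R_qcocommr hG').
Qed.

Lemma quasi_cocomm_S L : quasi_cocomm L -> quasi_cocomm [seq (S p.1, p.2) | p <- L].
Proof.
move=> qcL W G hG; rewrite !tsum_map /=.
pose GS p q c := G (S p) (S q) c.
have hGS : trilin GS by rewrite /GS; linear_tac.
have eL y c : tsum (D (S y)) (fun b1 b2 => tsum R (fun s1 s2 => G (b1 * s2) (b2 * s1) c)) =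
              tsum (D y) (fun b1 b2 => tsum R (fun s1 s2 => GS (s2 * b2) (s1 * b1) c)).
  rewrite tsum_D_antipode; last by linear_tac.
  apply: eq_tsum => a1 a2.
  rewrite -(tsum_R_SS (f := fun s1 s2 => G (S a2 * s2) (S a1 * s1) c)); last by linear_tac.
  by apply: eq_tsum => s1 s2; rewrite /GS !antipodeM.
have eR y c : tsum (D (S y)) (fun b1 b2 => tsum R (fun s1 s2 => G (s2 * b2) (s1 * b1) c)) =
              tsum (D y) (fun b1 b2 => tsum R (fun s1 s2 => GS (b1 * s2) (b2 * s1) c)).
  rewrite tsum_D_antipode; last by linear_tac.
  apply: eq_tsum => a1 a2.
  rewrite -(tsum_R_SS (f := fun s1 s2 => G (s2 * S a1) (s1 * S a2) c)); last by linear_tac.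
  by apply: eq_tsum => s1 s2; rewrite /GS !antipodeM.
under eq_tsum => y c do rewrite eL.
under [RHS]eq_tsum => y c do rewrite eR.
exact: (esym (qcL W GS hGS)).
Qed.

Lemma quasi_cocomm_coprod_R : quasi_cocomm_coprod R.
Proof.
move=> W g hg.
rewrite (tsum_R_coprodl (G := fun a1 a2 c => tsum (D a2) (fun b1 b2 =>
  tsum R (fun s1 s2 => g a1 (b1 * s2) (b2 * s1) c)))); last by linear_tac.
rewrite (tsum_R_coprodl (G := fun a1 a2 c => tsum (D a2) (fun b1 b2 =>
  tsum R (fun s1 s2 => g a1 (s2 * b2) (s1 * b1) c)))); last by linear_tac.
apply: eq_tsum => r1 r2.
have hG : trilin (fun p q z => g r1 p q (r2 * z)) by linear_tac.
exact: (quasi_cocomm_R hG).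
Qed.

Lemma quasi_cocomm_coprod_SR : quasi_cocomm_coprod [seq (S r.1, r.2) | r <- R].
Proof.
move=> W g hg; rewrite !tsum_map /=.
under eq_tsum => r1 r2 do (rewrite tsum_D_antipode; last by linear_tac).
under [RHS]eq_tsum => r1 r2 do (rewrite tsum_D_antipode; last by linear_tac).
rewrite (tsum_R_coprodl (G := fun x y z => tsum (D (S x)) (fun b1 b2 =>
  tsum R (fun s1 s2 => g (S y) (b1 * s2) (b2 * s1) z)))); last by linear_tac.
rewrite (tsum_R_coprodl (G := fun x y z => tsum (D (S x)) (fun b1 b2 =>
  tsum R (fun s1 s2 => g (S y) (s2 * b2) (s1 * b1) z)))); last by linear_tac.
rewrite tsum_exchange [RHS]tsum_exchange.
apply: eq_tsum => t1 t2.
have hG : trilin (fun p q z => g (S t1) p q (z * t2)) by linear_tac.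
by have := quasi_cocomm_S quasi_cocomm_R hG; rewrite !tsum_map.
Qed.

Lemma quasi_cocomm_coprod_RS : quasi_cocomm_coprod [seq (S r.2, r.1) | r <- R].
Proof.
move=> W g hg; rewrite !tsum_map /=.
under eq_tsum => r1 r2 do (rewrite tsum_D_antipode; last by linear_tac).
under [RHS]eq_tsum => r1 r2 do (rewrite tsum_D_antipode; last by linear_tac).
rewrite (tsum_R_coprodr (G := fun c x y => tsum (D (S x)) (fun b1 b2 =>
  tsum R (fun s1 s2 => g (S y) (b1 * s2) (b2 * s1) c)))); last by linear_tac.
rewrite (tsum_R_coprodr (G := fun c x y => tsum (D (S x)) (fun b1 b2 =>
  tsum R (fun s1 s2 => g (S y) (s2 * b2) (s1 * b1) c)))); last by linear_tac.
apply: eq_tsum => r1 r2.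
have hG : trilin (fun p q z => g (S r2) p q (r1 * z)) by linear_tac.
by have := quasi_cocomm_S quasi_cocomm_Rswap hG; rewrite !tsum_map.
Qed.

Lemma quasi_cocomm_coprod_SSR : quasi_cocomm_coprod [seq (S (S r.2), r.1) | r <- R].
Proof.
move=> W g hg; rewrite !tsum_map /=.
do 2 under eq_tsum => r1 r2 do (rewrite tsum_D_antipode; last by linear_tac).
do 2 under [RHS]eq_tsum => r1 r2 do (rewrite tsum_D_antipode; last by linear_tac).
rewrite (tsum_R_coprodr (G := fun c x y => tsum (D (S (S y))) (fun b1 b2 =>
  tsum R (fun s1 s2 => g (S (S x)) (b1 * s2) (b2 * s1) c)))); last by linear_tac.
rewrite (tsum_R_coprodr (G := fun c x y => tsum (D (S (S y))) (fun b1 b2 =>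
  tsum R (fun s1 s2 => g (S (S x)) (s2 * b2) (s1 * b1) c)))); last by linear_tac.
rewrite tsum_exchange [RHS]tsum_exchange.
apply: eq_tsum => t1 t2.
have hG : trilin (fun p q z => g (S (S t2)) p q (z * t1)) by linear_tac.
by have := quasi_cocomm_S (quasi_cocomm_S quasi_cocomm_Rswap) hG; rewrite !tsum_map.
Qed.

Lemma quasi_cocomm_coprod_nu_coinvariant L : quasi_cocomm_coprod L -> nu_coinvariant L.
Proof.
move=> qcL W g hg.
pose g' a1 p q c := tsum R (fun r1 r2 => g (r2 * p) (S a1 * S r1 * q) c).
have hg' : quadlin g' by rewrite /g'; linear_tac.
have expand x c : tsum (nu D S R x) (fun p q => g p q c) =
    tsum (D x) (fun a1 a2 => tsum (D a2) (fun b1 b2 =>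
      tsum R (fun s1 s2 => g' a1 (b1 * s2) (b2 * s1) c))).
  rewrite tsum_nu.
  under eq_tsum => r1 r2 do (rewrite tsum_D_coassoc; last by linear_tac).
  rewrite tsum_exchange; apply: eq_tsum => a1 a2.
  rewrite tsum_exchange; apply: eq_tsum => b1 b2.
  rewrite tsum_exchange; apply: eq_tsum => s1 s2.
  by apply: eq_tsum => r1 r2; rewrite !mulrA.
have collapse x c : tsum (D x) (fun a1 a2 => tsum (D a2) (fun b1 b2 =>
      tsum R (fun s1 s2 => g' a1 (s2 * b2) (s1 * b1) c))) = g x 1 c.
  transitivity (tsum (D x) (fun a1 a2 => tsum (D a2) (fun b1 b2 => g b2 (S a1 * b1) c))).
    apply: eq_tsum => a1 a2; apply: eq_tsum => b1 b2; rewrite tsum_exchange.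
    have hb : bilin (fun p q => g (q * b2) (S a1 * p * b1) c) by linear_tac.
    have := tsum_SR_R hb; rewrite /= mul1r mulr1 => <-.
    by do 2 (apply: eq_tsum => ? ? /=); rewrite !mulrA.
  rewrite -tsum_D_coassoc; last by linear_tac.
  under eq_tsum => a1 a2 do (rewrite (tsum_D_antipodel a1 (g := fun t => g a2 t c)); last by linear_tac).
  by rewrite (tsum_D_counitl x (g := fun t => g t 1 c)) //; linear_tac.
under eq_tsum => x c do rewrite expand.
rewrite (qcL W g' hg').
by apply: eq_tsum => x c; rewrite collapse.
Qed.

Lemma tsum_nu_central (W : lmodType k) x (F : H -> H -> W) Q : bilin F ->
  tsum (nu D S R x) (fun p q => F p (q * Q)) = tsum (nu D S R x) (fun p q => F p (Q * q)).
Proof.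
move=> hF; case: (nu_in_H_ZH x) => t' [nu_t' t'_central].
have hFr : bilin (fun p q => F p (q * Q)) by linear_tac.
have hFl : bilin (fun p q => F p (Q * q)) by linear_tac.
rewrite /tsum (nu_t' _ _ hFr) (nu_t' _ _ hFl).
by apply: eq_big_seq => p /t'_central ->.
Qed.

Ltac under_tsum n tac := lazymatch n with
  | O => tac
  | ?m.+1 => under eq_tsum => ? ? do under_tsum m tac
  end.

Ltac tsum_exchanges depths := lazymatch depths with
  | [::] => idtac
  | ?n :: ?depths' => under_tsum n ltac:(rewrite tsum_exchange); tsum_exchanges depths'
  end.

Lemma tsum_nuM (W : lmodType k) (f : H -> H -> W) x y : bilin f ->
  tsum (nu D S R (x * y)) f =
  tsum (nu D S R x) (fun p1 p2 => tsum (nu D S R y) (fun q1 q2 => f (p1 * q1) (p2 * q2))).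
Proof.
move=> hf.
have central P Q V A B :
    tsum (nu D S R x) (fun p1 p2 => f (p1 * P) (p2 * (Q * V * A * B))) =
    tsum (nu D S R x) (fun p1 p2 => f (p1 * P) (Q * p2 * (V * A * B))).
  rewrite -(tsum_nu_central x (F := fun p q => f (p * P) (q * (V * A * B)))); last by linear_tac.
  by apply: eq_tsum => p1 p2; rewrite !mulrA.
(* The pair (t, v) is the factor R21 (id (x) S)(R21) = 1 (x) 1. *)
transitivity (tsum R (fun r1 r2 => tsum (D x) (fun xa1 xa2 => tsum (D y) (fun ya1 ya2 =>
  tsum (D xa1) (fun xb1 xb2 => tsum (D ya1) (fun yb1 yb2 => tsum R (fun s1 s2 =>
  tsum R (fun t1 t2 => tsum R (fun v1 v2 =>
    f (r2 * xb2 * (t2 * v2) * yb2 * s2) (S yb1 * S xb1 * S r1 * xa2 * (t1 * S v1) * ya2 * s1)))))))))).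
  rewrite tsum_nu.
  under eq_tsum => r1 r2 do (rewrite tsum_DM; last by linear_tac).
  under eq_tsum => r1 r2 do under eq_tsum => xa1 xa2 do under eq_tsum => ya1 ya2 do
    (rewrite tsum_DM; last by linear_tac).
  apply: eq_tsum => r1 r2; apply: eq_tsum => xa1 xa2; apply: eq_tsum => ya1 ya2.
  apply: eq_tsum => xb1 xb2; apply: eq_tsum => yb1 yb2; apply: eq_tsum => s1 s2.
  have hF : bilin (fun p q =>
      f (r2 * xb2 * q * yb2 * s2) (S yb1 * S xb1 * S r1 * xa2 * p * ya2 * s1)) by linear_tac.
  by rewrite (tsum_R_SR hF) /= !mulr1 antipodeM !mulrA.
symmetry; rewrite tsum_exchange tsum_nu /=.
under_tsum 4%N ltac:(rewrite central tsum_nu).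
(* reorder the summations [v ya yb s r xa xb t] as [r xa ya xb yb s t v] *)
tsum_exchanges [:: 0; 1; 2; 3; 4; 5; 6; 2; 1; 0; 3; 2; 1; 4; 3]%N.
by do 8 (apply: eq_tsum => ? ? /=); rewrite !mulrA.
Qed.

Section Drinfeld.
Variable W : lmodType k.
Variable f : H -> H -> W.
Hypothesis hf : bilin f.

Let u := drinfeld_u S R.

Lemma tsum_nu_drinfeld : tsum (nu D S R u) f = f u 1.
Proof.
rewrite -[u]/(tsum R (fun a b => S b * a)).
rewrite -(tsum_linear (g := fun h => tsum (nu D S R h) f)); last by nu_linear_tac.
under eq_tsum => a b do rewrite tsum_nuM // tsum_exchange.
have hg : trilin (fun p1 p2 c => tsum (nu D S R (S c)) (fun q1 q2 => f (q1 * p1) (q2 * p2))).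
  by nu_linear_tac.
rewrite (quasi_cocomm_coprod_nu_coinvariant quasi_cocomm_coprod_R hg).
have hg' : trilin (fun q1 q2 c => f (q1 * c) (q2 * 1)) by linear_tac.
have := quasi_cocomm_coprod_nu_coinvariant quasi_cocomm_coprod_RS hg'.
rewrite !tsum_map /= => ->.
by rewrite mulr1 (tsum_linear (g := fun t => f t 1)) //; linear_tac.
Qed.

Lemma tsum_nu_antipode_drinfeld : tsum (nu D S R (S u)) f = f (S u) 1.
Proof.
have -> : S u = tsum R (fun a b => S a * S (S b)).
  rewrite -[u]/(tsum R (fun a b => S b * a)) -(tsum_linear (g := S)) //.
  by apply: eq_tsum => a b; rewrite antipodeM.
rewrite -(tsum_linear (g := fun h => tsum (nu D S R h) f)); last by nu_linear_tac.
under eq_tsum => a b do rewrite tsum_nuM //.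
have hg : trilin (fun p1 p2 c => tsum (nu D S R (S (S c))) (fun q1 q2 => f (p1 * q1) (p2 * q2))).
  by nu_linear_tac.
have := quasi_cocomm_coprod_nu_coinvariant quasi_cocomm_coprod_SR hg.
rewrite !tsum_map /= => ->.
have hg' : trilin (fun q1 q2 c => f (S c * q1) (1 * q2)) by linear_tac.
have := quasi_cocomm_coprod_nu_coinvariant quasi_cocomm_coprod_SSR hg'.
rewrite !tsum_map /= => ->.
by rewrite mulr1 (tsum_linear (g := fun t => f t 1)) //; linear_tac.
Qed.
End Drinfeld.

Lemma tsum_nu_drinfeld_mul (W : lmodType k) (f : H -> H -> W) : bilin f ->
  let u := drinfeld_u S R in tsum (nu D S R (u * S u)) f = f (u * S u) 1.
Proof.
move=> hf u; rewrite tsum_nuM //.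
have hb : bilin (fun p1 p2 => tsum (nu D S R (S u)) (fun q1 q2 => f (p1 * q1) (p2 * q2))).
  by nu_linear_tac.
rewrite (tsum_nu_drinfeld hb).
have hb' : bilin (fun q1 q2 => f (u * q1) (1 * q2)) by linear_tac.
by rewrite (tsum_nu_antipode_drinfeld hb') mulr1.
Qed.
End Hopf.

Theorem proposition3p4 (k : fieldType) (H : algType k)
  (D : H -> seq (H * H)) (eps : H -> k) (S : H -> H) (R : seq (H * H)) :
  semiquasitriangular D eps S R ->
  let u := drinfeld_u S R in
  teq2 (nu D S R u) [:: (u, 1)] /\
  teq2 (nu D S R (S u)) [:: (S u, 1)] /\
  teq2 (nu D S R (u * S u)) [:: (u * S u, 1)].
Proof.
move=> [[DL [DM [D1 [Dco [epsL [epsM [eps1 [cul [cur [SL [Sl Sr]]]]]]]]]]]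
        [_ [Rinv [R1 [R2 [R3 [R4 [nuZ _]]]]]]]] u.
split; [|split] => W f hf; rewrite big_seq1 /=.
- exact: tsum_nu_drinfeld.
- exact: tsum_nu_antipode_drinfeld.
- exact: tsum_nu_drinfeld_mul.
Qed.
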